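(* Let $h$ be a positive integer, $\alpha=\dfrac{h+\sqrt{h^2+4}}{2}$, and define $q_{-1}=0$, $q_0=1$, $q_{k+1}=hq_k+q_{k-1}$ for $k\ge0$. Then for integers $n\ge1$: $$\lceil\alpha n\rceil-\alpha n=\begin{cases} j/\alpha^{2k} & \text{if } n=jq_{2k-1},\ k\ge1,\ 1\le j<\alpha^{2k},\\ (\alpha-1)/\alpha^{2k+1} & \text{if } n=q_{2k-1}+q_{2k},\ k\ge0,\\ (\alpha+1)/\alpha^{2k+2} & \text{if } n=q_{2k+1}-q_{2k},\ k\ge0,\end{cases}$$ and $n(\lceil\alpha n\rceil-\alpha n)\ge1$ for all other integers $n\ge1$ (i.e. all $n\ge1$ not of any of these three forms).
   Context: The numbers $q_k$ are the denominators of the convergents of the regular continued fraction $\alpha=[h;h,h,\dots]$. *)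

From Stdlib Require Import Reals Lra Lia.
Open Scope R_scope.

Definition alpha (h : nat) : R := (INR h + sqrt (INR h ^ 2 + 4)) / 2.

(* Shifted denominators: qs h k = q_{k-1}, i.e. qs 0 = q_{-1} = 0, qs 1 = q_0 = 1,
   q_{k+1} = h q_k + q_{k-1}. *)
Fixpoint qs (h : nat) (k : nat) : nat :=
  match k with
  | O => 0%nat
  | S k' => match k' with
            | O => 1%nat
            | S k'' => (h * qs h k' + qs h k'')%nat
            end
  end.

Definition q (h : nat) (m : Z) : nat := qs h (Z.to_nat (m + 1)).

Definition Rceil (x : R) : R := IZR (- Int_part (- x)).

From Stdlib Require Import Reals Lra Lia ZArith.
Open Scope R_scope.

(* Put m = ⌈α n⌉ and x = m - α n.  Since α^2 = h α + 1, the integer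
   N(m, n) = m^2 - h m n - n^2 equals x (x + sqrt(h^2 + 4) n), so n x < 1 forces
   0 <= N(m, n) <= h + 1, and N(m, n) <= h once h >= 3.  On pairs with a > 0 and such a
   norm, the substitution (a, b) ↦ (a - h b, (1 + h^2) b - h a) preserves N and strictly
   decreases b > 0; it can only fail to keep b >= 0 at (h + 1, 1) and (h^2 - h + 1, h - 1).
   Since it undoes two steps of the recurrence, descending to b = 0 or to these two pairs
   shows that (m, n) is j (q_{2k}, q_{2k-1}), (q_{2k} + q_{2k+1}, q_{2k-1} + q_{2k}) or
   (q_{2k+2} - q_{2k+1}, q_{2k+1} - q_{2k}).  For these n the gap is read off from
   q_t - α q_{t-1} = (-1)^t / α^t. *)

Definition qz (h t : nat) : Z := Z.of_nat (qs h t).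

Definition norm_form (h a b : Z) : Z := (a * a - h * a * b - b * b)%Z.

Definition small_norm (h k : Z) : Prop := (0 <= k <= h + 1 /\ (3 <= h -> k <= h))%Z.

(* [qz h (t + 1)] is q_t; the three families are the pairs (⌈α n⌉, n) of the statement. *)
Definition special_pair (h : nat) (a b : Z) : Prop := exists t : nat,
  (exists j : Z, 1 <= j /\ a = j * qz h (2 * t + 1) /\ b = j * qz h (2 * t))%Z \/
  (a = qz h (2 * t + 1) + qz h (2 * t + 2) /\ b = qz h (2 * t) + qz h (2 * t + 1))%Z \/
  (a = qz h (2 * t + 3) - qz h (2 * t + 2) /\ b = qz h (2 * t + 2) - qz h (2 * t + 1))%Z.

Lemma qs_SS h t : qs h (S (S t)) = (h * qs h (S t) + qs h t)%nat.
Proof. reflexivity. Qed.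

Lemma qz_initial h :
  (qz h 0 = 0 /\ qz h 1 = 1 /\ qz h 2 = Z.of_nat h /\ qz h 3 = Z.of_nat h * Z.of_nat h + 1)%Z.
Proof. unfold qz. rewrite !qs_SS. simpl qs. lia. Qed.

Lemma qz_ascend h t :
  ((1 + Z.of_nat h * Z.of_nat h) * qz h (t + 1) + Z.of_nat h * qz h t = qz h (t + 3) /\
   Z.of_nat h * qz h (t + 1) + qz h t = qz h (t + 2))%Z.
Proof.
  unfold qz. replace (t + 3)%nat with (S (S (S t))) by lia.
  replace (t + 2)%nat with (S (S t)) by lia. replace (t + 1)%nat with (S t) by lia.
  rewrite !qs_SS, !Nat2Z.inj_add, !Nat2Z.inj_mul.
  split; lia.
Qed.

Lemma norm_form_descend h a b :
  norm_form h (a - h * b) ((1 + h * h) * b - h * a) = norm_form h a b.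
Proof. unfold norm_form. ring. Qed.

Lemma special_pair_ascend h a b :
  special_pair h (a - Z.of_nat h * b) ((1 + Z.of_nat h * Z.of_nat h) * b - Z.of_nat h * a) ->
  special_pair h a b.
Proof.
  intros [t Ht]. exists (S t).
  destruct (qz_ascend h (2 * t)) as [A0 B0].
  destruct (qz_ascend h (2 * t + 1)) as [A1 B1].
  destruct (qz_ascend h (2 * t + 2)) as [A2 B2].
  rewrite Nat.mul_succ_r. rewrite <- !Nat.add_assoc in *. cbn [Nat.add] in *.
  destruct Ht as [[j [Hj [Ha Hb]]] | [[Ha Hb] | [Ha Hb]]].
  - left. exists j. split; [exact Hj|]. nia.
  - right; left. nia.
  - right; right. nia.
Qed.

Lemma norm_form_terminal h a b :
  (1 <= h)%Z -> (1 <= b)%Z -> (h * b < a)%Z -> ((1 + h * h) * b < h * a)%Z ->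
  small_norm h (norm_form h a b) ->
  (a = h + 1 /\ b = 1)%Z \/ (a = h * h - h + 1 /\ b = h - 1)%Z.
Proof.
  unfold small_norm, norm_form. intros Hh Hb Hab Hdesc [[_ Hle] Hle3].
  set (c := (a - h * b)%Z) in *.
  assert (Ea : a = (h * b + c)%Z) by (unfold c; ring).
  assert (Hc : (1 <= c)%Z) by lia.
  assert (Hbc : (b < h * c)%Z) by nia.
  (* the norm is b (h c - b) + c^2, which is too large unless c = 1 and b is 1 or h - 1 *)
  assert (En : (a * a - h * a * b - b * b = b * (h * c - b) + c * c)%Z) by (rewrite Ea; ring).
  rewrite En in Hle, Hle3.
  destruct (Z.eq_dec c 1) as [Hc1 | Hc1].
  - rewrite Hc1 in *.
    destruct (Z.eq_dec b 1) as [Eb | Eb]; [left; lia |].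
    destruct (Z.eq_dec b (h - 1)) as [Eb' | Eb'].
    { right. split; [rewrite Ea, Eb'; ring | exact Eb']. }
    exfalso.
    assert (0 <= (b - 2) * (h - b - 2))%Z by (apply Z.mul_nonneg_nonneg; lia).
    nia.
  - exfalso.
    assert (0 <= (b - 1) * (h * c - b - 1))%Z by (apply Z.mul_nonneg_nonneg; lia).
    nia.
Qed.

Lemma special_pair_of_small_norm h : (1 <= h)%nat -> forall b, (0 <= b)%Z ->
  forall a, (1 <= a)%Z -> small_norm (Z.of_nat h) (norm_form (Z.of_nat h) a b) ->
  special_pair h a b.
Proof.
  intros Hh. refine (Zlt_0_ind _ _). intros b IH Hb0 a Ha Hsmall.
  pose proof (qz_initial h) as Q.
  set (hz := Z.of_nat h) in *.
  assert (Hhz : (1 <= hz)%Z) by lia.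
  destruct (Z.eq_dec b 0) as [Eb | Eb].
  { subst b. exists 0%nat. left. exists a. cbn [Nat.mul Nat.add]. lia. }
  assert (Hab : (hz * b < a)%Z).
  { destruct Hsmall as [[Hn0 _] _]. unfold norm_form in Hn0.
    assert (a * (a - hz * b) >= b * b)%Z by nia. nia. }
  destruct (Z_lt_le_dec ((1 + hz * hz) * b - hz * a) 0) as [Hneg | Hpos].
  - exists 0%nat. right.
    destruct (norm_form_terminal hz a b Hhz ltac:(lia) Hab ltac:(lia) Hsmall)
      as [[Ea Eb1] | [Ea Eb1]].
    + left. cbn [Nat.mul Nat.add]. lia.
    + right. cbn [Nat.mul Nat.add]. lia.
  - apply special_pair_ascend. apply IH.
    + nia.
    + lia.
    + rewrite norm_form_descend. exact Hsmall.
Qed.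

Lemma alpha_sq h : alpha h * alpha h = INR h * alpha h + 1.
Proof.
  unfold alpha. pose proof (pos_INR h).
  pose proof (sqrt_sqrt (INR h ^ 2 + 4) ltac:(nra)). nra.
Qed.

Lemma alpha_gt h : INR h < alpha h.
Proof.
  unfold alpha. pose proof (pos_INR h). pose proof (sqrt_pos (INR h ^ 2 + 4)).
  pose proof (sqrt_sqrt (INR h ^ 2 + 4) ltac:(nra)). nra.
Qed.

Lemma convergent_error h t :
  INR (qs h (S t)) - alpha h * INR (qs h t) = (-1) ^ t / alpha h ^ t.
Proof.
  assert (Ha : 0 < alpha h) by (pose proof (alpha_gt h); pose proof (pos_INR h); lra).
  induction t as [| t IH].
  - simpl. field.
  - rewrite qs_SS, plus_INR, mult_INR. cbn [pow].
    set (u := INR (qs h (S t))) in *. set (v := INR (qs h t)) in *.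
    assert (E : (INR h * u + v - alpha h * u) * alpha h = - (u - alpha h * v)).
    { pose proof (f_equal (fun z => z * u) (alpha_sq h)) as Hu. cbv beta in Hu. lra. }
    replace (INR h * u + v - alpha h * u) with (- (u - alpha h * v) / alpha h)
      by (apply (Rmult_eq_reg_r (alpha h)); [rewrite E; field |]; lra).
    rewrite IH. field. split; [apply pow_nonzero |]; lra.
Qed.

Lemma Rceil_bounds x : x <= Rceil x < x + 1.
Proof.
  unfold Rceil. rewrite opp_IZR. destruct (base_Int_part (- x)). lra.
Qed.

Lemma Rceil_IZR_sub m d : 0 <= d < 1 -> Rceil (IZR m - d) = IZR m.
Proof.
  intros Hd. unfold Rceil, Int_part.
  rewrite <- (tech_up (- (IZR m - d)) (- m + 1)); [f_equal; ring | |];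
    rewrite plus_IZR, opp_IZR; lra.
Qed.

Lemma Rdiv_in_unit x y : 0 <= x < y -> 0 <= x / y < 1.
Proof.
  intros Hxy. unfold Rdiv. split.
  - apply Rmult_le_pos; [| left; apply Rinv_0_lt_compat]; lra.
  - apply (Rmult_lt_reg_r y); [lra |]. rewrite Rmult_assoc, Rinv_l; lra.
Qed.

Definition ceil_gap (x : R) : R := Rceil x - x.

Lemma ceil_gap_IZR_sub m x d : x = IZR m - d -> 0 <= d < 1 -> ceil_gap x = d.
Proof. intros -> Hd. unfold ceil_gap. rewrite Rceil_IZR_sub by exact Hd. ring. Qed.

Section Gaps.

Variable h : nat.
Hypothesis hpos : (1 <= h)%nat.
Let a := alpha h.

Lemma one_lt_alpha : 1 < a.
Proof. pose proof (alpha_gt h). apply le_INR in hpos. simpl in hpos. unfold a. lra. Qed.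

Lemma alpha_pow_ge1 n : 1 <= a ^ n.
Proof. apply pow_R1_Rle. pose proof one_lt_alpha. lra. Qed.

Lemma alpha_mul_qs_even k : a * INR (qs h (2 * k)) = INR (qs h (2 * k + 1)) - / a ^ (2 * k).
Proof.
  pose proof (convergent_error h (2 * k)) as E. rewrite pow_1_even in E.
  replace (2 * k + 1)%nat with (S (2 * k)) by lia. unfold a. lra.
Qed.

Lemma alpha_mul_qs_odd k :
  a * INR (qs h (2 * k + 1)) = INR (qs h (2 * k + 2)) + / a ^ (2 * k + 1).
Proof.
  pose proof (convergent_error h (S (2 * k))) as E. rewrite pow_1_odd in E.
  replace (2 * k + 2)%nat with (S (S (2 * k))) by lia.
  replace (2 * k + 1)%nat with (S (2 * k)) by lia. unfold a. lra.
Qed.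

Lemma ceil_gap_multiple k j :
  INR j < a ^ (2 * k) -> ceil_gap (a * INR (j * qs h (2 * k))) = INR j / a ^ (2 * k).
Proof.
  intros Hj. apply ceil_gap_IZR_sub with (Z.of_nat (j * qs h (2 * k + 1))).
  - rewrite <- INR_IZR_INZ, !mult_INR.
    replace (a * (INR j * INR (qs h (2 * k)))) with (INR j * (a * INR (qs h (2 * k)))) by ring.
    rewrite alpha_mul_qs_even. unfold Rdiv. ring.
  - pose proof (pos_INR j). pose proof (alpha_pow_ge1 (2 * k)).
    apply Rdiv_in_unit; lra.
Qed.

Lemma ceil_gap_sum k :
  ceil_gap (a * INR (qs h (2 * k) + qs h (2 * k + 1))) = (a - 1) / a ^ (2 * k + 1).
Proof.
  pose proof one_lt_alpha. pose proof (alpha_pow_ge1 (2 * k)).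
  assert (Hpow : a ^ (2 * k + 1) = a ^ (2 * k) * a) by (rewrite pow_add; ring).
  apply ceil_gap_IZR_sub with (Z.of_nat (qs h (2 * k + 1) + qs h (2 * k + 2))).
  - rewrite <- INR_IZR_INZ, !plus_INR, Rmult_plus_distr_l.
    rewrite alpha_mul_qs_even, alpha_mul_qs_odd, Hpow.
    field. lra.
  - rewrite Hpow. apply Rdiv_in_unit; nra.
Qed.

Lemma alpha_succ_lt_pow k : (2 <= h \/ 1 <= k)%nat -> a + 1 < a ^ (2 * k + 2).
Proof.
  intros Hhk. pose proof one_lt_alpha. pose proof (alpha_sq h) as Hsq. fold a in Hsq.
  pose proof (alpha_pow_ge1 (2 * k)).
  rewrite pow_add. replace (a ^ 2) with (a * a) by ring.
  destruct Hhk as [H2 | Hk].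
  - apply le_INR in H2. simpl in H2. nra.
  - apply le_INR in hpos. simpl in hpos.
    assert (1 < a ^ (2 * k)) by (apply Rlt_pow_R1; [| lia]; lra).
    assert (a + 1 <= a * a) by nra. nra.
Qed.

Lemma ceil_gap_diff k n : (1 <= n)%nat ->
  Z.of_nat n = (qz h (2 * k + 2) - qz h (2 * k + 1))%Z ->
  ceil_gap (a * INR n) = (a + 1) / a ^ (2 * k + 2).
Proof.
  intros Hn En.
  pose proof one_lt_alpha. pose proof (alpha_pow_ge1 (2 * k + 1)).
  assert (Hpow : a ^ (2 * k + 2) = a ^ (2 * k + 1) * a)
    by (replace (2 * k + 2)%nat with (S (2 * k + 1)) by lia; simpl; ring).
  assert (Hodd2 : a * INR (qs h (2 * k + 2)) = INR (qs h (2 * k + 3)) - / a ^ (2 * k + 2)).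
  { pose proof (alpha_mul_qs_even (S k)) as E.
    replace (2 * S k)%nat with (2 * k + 2)%nat in E by lia.
    replace (2 * k + 2 + 1)%nat with (2 * k + 3)%nat in E by lia. exact E. }
  assert (Hbig : a + 1 < a ^ (2 * k + 2)).
  { apply alpha_succ_lt_pow. destruct k as [| k]; [| lia].
    destruct (qz_initial h) as (_ & Q1 & Q2 & _). cbn [Nat.mul Nat.add] in En. lia. }
  apply ceil_gap_IZR_sub with (qz h (2 * k + 3) - qz h (2 * k + 2))%Z.
  - rewrite INR_IZR_INZ, En, !minus_IZR. unfold qz. rewrite <- !INR_IZR_INZ.
    rewrite Rmult_minus_distr_l, Hodd2, alpha_mul_qs_odd, Hpow.
    field. lra.
  - apply Rdiv_in_unit; lra.
Qed.

Lemma norm_form_alpha_gap m n :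
  IZR (norm_form (Z.of_nat h) m (Z.of_nat n)) =
  (IZR m - a * INR n) * (IZR m - a * INR n + (2 * a - INR h) * INR n).
Proof.
  unfold norm_form. rewrite !minus_IZR, !mult_IZR, <- !INR_IZR_INZ.
  pose proof (f_equal (fun z => z * (INR n * INR n)) (alpha_sq h)) as Hsq.
  cbv beta in Hsq. fold a in Hsq. lra.
Qed.

Lemma small_norm_of_lt K : 0 <= IZR K < 2 * a - INR h + 1 / 4 -> small_norm (Z.of_nat h) K.
Proof.
  intros [HK0 HK].
  pose proof (alpha_gt h) as Hgt. pose proof (alpha_sq h) as Hsq. fold a in Hgt, Hsq.
  apply le_INR in hpos. simpl in hpos.
  (* 2 a - h = sqrt (h^2 + 4) < h + 7/4, and < h + 3/4 once h >= 3 *)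
  assert (Hs : (2 * a - INR h) * (2 * a - INR h) = INR h * INR h + 4) by nra.
  rewrite INR_IZR_INZ in *. unfold small_norm. split; [split |].
  - apply le_IZR. exact HK0.
  - assert (K < Z.of_nat h + 2)%Z; [| lia].
    apply lt_IZR. rewrite plus_IZR. nra.
  - intros H3. apply IZR_le in H3.
    assert (K < Z.of_nat h + 1)%Z; [| lia].
    apply lt_IZR. rewrite plus_IZR. nra.
Qed.

Lemma small_norm_of_small_gap m n : (2 <= n)%nat ->
  0 <= IZR m - a * INR n -> INR n * (IZR m - a * INR n) < 1 ->
  small_norm (Z.of_nat h) (norm_form (Z.of_nat h) m (Z.of_nat n)).
Proof.
  intros Hn2 Hx0 Hnx. apply le_INR in Hn2. simpl in Hn2.
  apply small_norm_of_lt. rewrite norm_form_alpha_gap.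
  pose proof (alpha_gt h) as Hgt. pose proof (pos_INR h). fold a in Hgt.
  set (x := IZR m - a * INR n) in *. set (s := 2 * a - INR h).
  assert (Hs : 0 < s) by (unfold s; lra).
  assert (x < 1 / 2) by nra.
  assert (x * x < 1 / 4) by nra.
  assert (0 <= s * (INR n * x) <= s)
    by (split; [apply Rmult_le_pos; [| apply Rmult_le_pos] |]; nra).
  replace (x * (x + s * INR n)) with (x * x + s * (INR n * x)) by ring.
  split; nra.
Qed.

Lemma multiple_coeff_lt_alpha_pow t j m n :
  Z.of_nat n = (j * qz h (2 * t))%Z -> m = (j * qz h (2 * t + 1))%Z ->
  IZR m - a * INR n < 1 -> IZR j < a ^ (2 * t).
Proof.
  intros En Em Hx.
  assert (Egap : IZR m - a * INR n = IZR j / a ^ (2 * t)).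
  { rewrite Em, INR_IZR_INZ, En, !mult_IZR. unfold qz. rewrite <- !INR_IZR_INZ.
    replace (IZR j * INR (qs h (2 * t + 1)) - a * (IZR j * INR (qs h (2 * t))))
      with (IZR j * (INR (qs h (2 * t + 1)) - a * INR (qs h (2 * t)))) by ring.
    rewrite alpha_mul_qs_even. unfold Rdiv. ring. }
  pose proof (alpha_pow_ge1 (2 * t)).
  rewrite Egap in Hx. unfold Rdiv in Hx.
  apply (Rmult_lt_reg_r (/ a ^ (2 * t))); [apply Rinv_0_lt_compat; lra |].
  rewrite Rinv_r by lra. exact Hx.
Qed.

Lemma small_gap_classification n : (1 <= n)%nat -> INR n * ceil_gap (a * INR n) < 1 ->
  (exists k j, (1 <= k)%nat /\ (1 <= j)%nat /\ INR j < a ^ (2 * k) /\ n = (j * qs h (2 * k))%nat) \/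
  (exists k, n = (qs h (2 * k) + qs h (2 * k + 1))%nat) \/
  (exists k, Z.of_nat n = (qz h (2 * k + 2) - qz h (2 * k + 1))%Z).
Proof.
  intros Hn Hlt.
  destruct (Nat.eq_dec n 1) as [-> | Hn1]; [right; left; exists 0%nat; reflexivity |].
  set (m := (- Int_part (- (a * INR n)))%Z).
  change (ceil_gap (a * INR n)) with (IZR m - a * INR n) in Hlt.
  pose proof (Rceil_bounds (a * INR n)) as Hceil.
  change (Rceil (a * INR n)) with (IZR m) in Hceil.
  assert (Hm : (1 <= m)%Z).
  { pose proof one_lt_alpha. apply le_INR in Hn. simpl in Hn.
    enough (0 < m)%Z by lia. apply lt_0_IZR. nra. }
  assert (Hpair : special_pair h m (Z.of_nat n)).
  { apply special_pair_of_small_norm; [exact hpos | lia | exact Hm |].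
    apply small_norm_of_small_gap; [lia | lra | exact Hlt]. }
  destruct Hpair as [t [[j [Hj [Em En]]] | [[Em En] | [Em En]]]].
  - destruct (qz_initial h) as (Q0 & _).
    destruct t as [| t]; [cbn [Nat.mul Nat.add] in En; rewrite Q0 in En; lia |].
    left. exists (S t), (Z.to_nat j). repeat split; [lia | lia | |].
    + rewrite INR_IZR_INZ, Z2Nat.id by lia.
      apply (multiple_coeff_lt_alpha_pow (S t) j m n En Em). lra.
    + apply Nat2Z.inj. rewrite Nat2Z.inj_mul, Z2Nat.id by lia. exact En.
  - right; left. exists t. unfold qz in En. lia.
  - right; right. exists t. exact En.
Qed.

End Gaps.

Lemma q_two_mul_sub_one h k : q h (2 * Z.of_nat k - 1) = qs h (2 * k).
Proof. unfold q. f_equal. lia. Qed.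

Lemma q_two_mul h k : q h (2 * Z.of_nat k) = qs h (2 * k + 1).
Proof. unfold q. f_equal. lia. Qed.

Lemma q_two_mul_add_one h k : q h (2 * Z.of_nat k + 1) = qs h (2 * k + 2).
Proof. unfold q. f_equal. lia. Qed.

Theorem lemma4 (h : nat) (hpos : (1 <= h)%nat) (n : nat) (hn : (1 <= n)%nat) :
  let a := alpha h in
  let d := Rceil (a * INR n) - a * INR n in
  (forall (k j : nat), (1 <= k)%nat -> (1 <= j)%nat -> INR j < a ^ (2 * k) ->
     n = (j * q h (2 * Z.of_nat k - 1))%nat -> d = INR j / a ^ (2 * k)) /\
  (forall k : nat,
     n = (q h (2 * Z.of_nat k - 1) + q h (2 * Z.of_nat k))%nat ->
     d = (a - 1) / a ^ (2 * k + 1)) /\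
  (forall k : nat,
     Z.of_nat n = (Z.of_nat (q h (2 * Z.of_nat k + 1)) - Z.of_nat (q h (2 * Z.of_nat k)))%Z ->
     d = (a + 1) / a ^ (2 * k + 2)) /\
  ((~ exists k j : nat, (1 <= k)%nat /\ (1 <= j)%nat /\ INR j < a ^ (2 * k) /\
        n = (j * q h (2 * Z.of_nat k - 1))%nat) ->
   (~ exists k : nat, n = (q h (2 * Z.of_nat k - 1) + q h (2 * Z.of_nat k))%nat) ->
   (~ exists k : nat, Z.of_nat n =
        (Z.of_nat (q h (2 * Z.of_nat k + 1)) - Z.of_nat (q h (2 * Z.of_nat k)))%Z) ->
   INR n * d >= 1).
Proof.
  cbv zeta. fold (ceil_gap (alpha h * INR n)).
  split; [| split; [| split]].
  - intros k j _ _ Hj ->. rewrite q_two_mul_sub_one. exact (ceil_gap_multiple h hpos k j Hj).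
  - intros k ->. rewrite q_two_mul_sub_one, q_two_mul. exact (ceil_gap_sum h hpos k).
  - intros k En. rewrite q_two_mul_add_one, q_two_mul in En. exact (ceil_gap_diff h hpos k n hn En).
  - intros N1 N2 N3. apply Rnot_lt_ge. intros Hlt.
    destruct (small_gap_classification h hpos n hn Hlt)
      as [(k & j & Hk & Hj & Hja & En) | [(k & En) | (k & En)]].
    + apply N1. exists k, j. rewrite q_two_mul_sub_one. auto.
    + apply N2. exists k. rewrite q_two_mul_sub_one, q_two_mul. exact En.
    + apply N3. exists k. rewrite q_two_mul_add_one, q_two_mul. exact En.
Qed.
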